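(* Let $m\geq 1$ be an integer. For all integers $n\geq 1$ and all real $x\in(0,\pi)$, $$\sum_{k=0}^n \binom{n-k+m}{m}\cos(kx)>m.$$ Moreover, the lower bound $m$ is sharp, i.e. it cannot be replaced by any larger constant (valid for all $n\ge1$, $x\in(0,\pi)$). *)

From Stdlib Require Import Reals.
Open Scope R_scope.

Definition Ssum (m n : nat) (x : R) : R :=
  sum_f_R0 (fun k => Binomial.C (n - k + m) m * cos (INR k * x)) n.

From Stdlib Require Import Reals Lra Lia Factorial.
Open Scope R_scope.

(* Pascal's rule for the
   coefficients gives the recurrence
       S_{m+1,n+1} = S_{m+1,n} + S_{m,n+1},            S_{m,0} = 1,
   which reduces everything to the case m = 0 (the Dirichlet-type sum of
   cosines) and then m = 1 (the Fejer-type sum).  Telescoping with the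
   product formula for cosines gives closed forms:
       2(1 - cos x) S_{0,n} = (1 - cos x) + cos(nx) - cos((n+1)x),
       2(1 - cos x) S_{1,n} = (n+1)(1 - cos x) + 1 - cos((n+1)x),
   from which S_{1,n} > 1 on (0, pi) for n >= 1.  Induction on m along the
   recurrence then yields S_{m,n} > m for all m, n >= 1.  Sharpness comes
   from the explicit value S_{m,1}(x) = (m+1) + cos x, which tends to m as
   x tends to pi; choosing x = acos(-1 + d/2) gets within d of m. *)

Lemma C_diag (n : nat) : Binomial.C n n = 1.
Proof.
  unfold Binomial.C. rewrite Nat.sub_diag. simpl fact. rewrite Rmult_1_r.
  apply Rinv_r, INR_fact_neq_0.
Qed.

Lemma C_zero (n : nat) : Binomial.C n 0 = 1.
Proof.
  unfold Binomial.C. rewrite Nat.sub_0_r. simpl fact. rewrite Rmult_1_l.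
  apply Rinv_r, INR_fact_neq_0.
Qed.

Lemma C_succ_diag (n : nat) : Binomial.C (S n) n = INR (S n).
Proof.
  unfold Binomial.C. replace (S n - n)%nat with 1%nat by lia.
  change (fact (S n)) with (S n * fact n)%nat. rewrite mult_INR.
  simpl fact. change (INR 1) with 1.
  field. apply INR_fact_neq_0.
Qed.

Lemma Ssum_n0 (m : nat) (x : R) : Ssum m 0 x = 1.
Proof. unfold Ssum. simpl. rewrite C_diag, Rmult_0_l, cos_0. ring. Qed.

Lemma Ssum_n1 (m : nat) (x : R) : Ssum m 1 x = INR (S m) + cos x.
Proof.
  unfold Ssum. simpl sum_f_R0. simpl Nat.sub.
  rewrite C_succ_diag, C_diag, Rmult_0_l, cos_0. simpl INR.
  replace (1 * x) with x by ring. ring.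
Qed.

Lemma Ssum_pascal (m n : nat) (x : R) :
  Ssum (S m) (S n) x = Ssum (S m) n x + Ssum m (S n) x.
Proof.
  unfold Ssum. rewrite !tech5, Nat.sub_diag, !Nat.add_0_l, !C_diag.
  assert (Hterms :
    sum_f_R0 (fun k => Binomial.C (S n - k + S m) (S m) * cos (INR k * x)) n =
    sum_f_R0 (fun k => Binomial.C (n - k + S m) (S m) * cos (INR k * x)) n +
    sum_f_R0 (fun k => Binomial.C (S n - k + m) m * cos (INR k * x)) n).
  { rewrite <- plus_sum. apply sum_eq. intros k Hk.
    replace (S n - k + S m)%nat with (S (n - k + S m)) by lia.
    replace (S n - k + m)%nat with (n - k + S m)%nat by lia.
    rewrite <- pascal by lia. ring. }
  rewrite Hterms. ring.
Qed.

Lemma cos_three_term (k : nat) (x : R) :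
  cos (INR (S (S k)) * x) + cos (INR k * x) = 2 * cos (INR (S k) * x) * cos x.
Proof.
  replace (INR (S (S k)) * x) with (INR (S k) * x + x) by (rewrite !S_INR; ring).
  replace (INR k * x) with (INR (S k) * x - x) by (rewrite !S_INR; ring).
  rewrite cos_plus, cos_minus. ring.
Qed.

Lemma Ssum0_closed (n : nat) (x : R) :
  2 * (1 - cos x) * Ssum 0 n x = (1 - cos x) + cos (INR n * x) - cos (INR (S n) * x).
Proof.
  induction n as [|n IH].
  - rewrite Ssum_n0. simpl INR. rewrite Rmult_0_l, Rmult_1_l, cos_0. ring.
  - assert (Hsplit : Ssum 0 (S n) x = Ssum 0 n x + cos (INR (S n) * x)).
    { unfold Ssum. rewrite tech5, Nat.sub_diag, C_diag. f_equal; [|ring].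
      apply sum_eq. intros k _. rewrite !Nat.add_0_r, !C_zero. reflexivity. }
    rewrite Hsplit, Rmult_plus_distr_l, IH. pose proof (cos_three_term n x). lra.
Qed.

Lemma Ssum1_closed (n : nat) (x : R) :
  2 * (1 - cos x) * Ssum 1 n x = INR (S n) * (1 - cos x) + 1 - cos (INR (S n) * x).
Proof.
  induction n as [|n IH].
  - rewrite Ssum_n0. simpl INR. replace (1 * x) with x by ring. ring.
  - rewrite Ssum_pascal, Rmult_plus_distr_l, IH, Ssum0_closed, (S_INR (S n)). ring.
Qed.

Lemma cos_open_bound (x : R) : 0 < x < PI -> -1 < cos x < 1.
Proof.
  intros [H0 Hpi]. pose proof (sin_gt_0 x H0 Hpi). pose proof (sin2_cos2 x).
  unfold Rsqr in *. split; nra.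
Qed.

(* The case m = 1.  For n = 1 the value is 2 + cos x; for n >= 2 the closed
   form gives 2(1 - cos x)(S_{1,n} - 1) >= (n - 1)(1 - cos x) > 0. *)
Lemma Ssum1_gt1 (n : nat) (x : R) : (1 <= n)%nat -> 0 < x < PI -> Ssum 1 n x > 1.
Proof.
  intros Hn Hx. pose proof (cos_open_bound x Hx) as Hcos.
  destruct (Nat.eq_dec n 1) as [->|Hn1].
  - rewrite Ssum_n1. simpl INR. lra.
  - pose proof (Ssum1_closed n x) as Hclosed.
    pose proof (COS_bound (INR (S n) * x)).
    assert (Hn3 : INR (S n) >= 3).
    { replace 3 with (INR 3) by (simpl; ring). apply Rle_ge, le_INR. lia. }
    nra.
Qed.

(* The lower bound for every m >= 1, by induction on m and then on n along
   the Pascal recurrence: S_{m+2,n+1} = S_{m+2,n} + S_{m+1,n+1} > (m+2) + 0,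
   with S_{m+2,1} = 1 + S_{m+1,1} handling the first step in n. *)
Lemma Ssum_gt (m n : nat) (x : R) :
  (1 <= m)%nat -> (1 <= n)%nat -> 0 < x < PI -> Ssum m n x > INR m.
Proof.
  intros Hm. revert n. induction m as [|m IHm]; [lia|].
  intros n Hn Hx. destruct m as [|m].
  - apply Ssum1_gt1; assumption.
  - induction n as [|n IHn]; [lia|].
    rewrite Ssum_pascal.
    assert (Hprev : Ssum (S m) (S n) x > INR (S m)) by (apply IHm; auto; lia).
    pose proof (pos_INR (S m)).
    destruct n as [|n].
    + rewrite Ssum_n0, (S_INR (S m)). lra.
    + assert (Hrow : Ssum (S (S m)) (S n) x > INR (S (S m))) by (apply IHn; lia).
      lra.
Qed.

Lemma Ssum_near_bound (m : nat) (d : R) : 0 < d <= 1 ->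
  exists x : R, 0 < x < PI /\ Ssum m 1 x <= INR m + d.
Proof.
  intros Hd. exists (acos (-1 + d / 2)). split.
  - apply acos_bound_lt. lra.
  - rewrite Ssum_n1, cos_acos by lra. rewrite S_INR. lra.
Qed.

Theorem theorem1 (m : nat) (hm : (1 <= m)%nat) :
  (forall (n : nat) (x : R), (1 <= n)%nat -> 0 < x < PI -> Ssum m n x > INR m) /\
  (forall c : R, INR m < c ->
     exists (n : nat) (x : R), (1 <= n)%nat /\ 0 < x < PI /\ Ssum m n x <= c).
Proof.
  split.
  - intros n x Hn Hx. apply Ssum_gt; assumption.
  - intros c Hc.
    assert (Hd : 0 < Rmin (c - INR m) 1 <= 1)
      by (split; [apply Rmin_glb_lt; lra | apply Rmin_r]).
    destruct (Ssum_near_bound m _ Hd) as (x & Hx & Hle).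
    exists 1%nat, x. repeat split; try lia; try apply Hx.
    pose proof (Rmin_l (c - INR m) 1). lra.
Qed.
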